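(* Let $\mathfrak{U}$ be a Banach algebra such that $\mathfrak{U}^\sharp$ is symmetrically pseudo-amenable. Let $Y$ be a Banach $\mathfrak{U}$-bimodule and $X$ a closed $\mathfrak{U}$-subbimodule of $Y$. If $\delta:\mathfrak{U}\to Y$ is a bounded derivation and $\tau:\mathfrak{U}\to\mathcal{Z}_{\mathfrak{U}}(Y)$ is a linear map such that $(\delta+\tau)(\mathfrak{U})\subseteq X$, then $\delta(\mathfrak{U})\subseteq X$ and $\tau(\mathfrak{U})\subseteq\mathcal{Z}_{\mathfrak{U}}(X)$.
   Context: $\mathfrak{U}^\sharp=\mathfrak{U}\oplus\mathbb{C}1$ is the unitization of $\mathfrak{U}$ with the $\ell^1$-norm (a unit is adjoined even if $\mathfrak{U}$ is unital). For a bimodule $Y$, $\mathcal{Z}_{\mathfrak{U}}(Y)=\{y\in Y: ay=ya \text{ for all } a\in\mathfrak{U}\}$. A derivation is a linear map with $\delta(ab)=\delta(a)b+a\delta(b)$. For a Banach algebra $\mathfrak{A}$, $\mathfrak{A}\widehat{\otimes}\mathfrak{A}$ is the projective tensor product with $a(b\otimes c)=ab\otimes c$, $(b\otimes c)a=b\otimes ca$, $\pi(b\otimes c)=bc$ (extended linearly and continuously); the flip is $(b\otimes c)^\circ=c\otimes b$ and $\mathbf{t}$ is symmetric if $\mathbf{t}^\circ=\mathbf{t}$. A symmetric approximate diagonal is a net $\{\mathbf{t}_\lambda\}$ (not necessarily bounded) of symmetric elements with $a\mathbf{t}_\lambda-\mathbf{t}_\lambda a\to0$ and $\pi(\mathbf{t}_\lambda)a\to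 a$ for all $a\in\mathfrak{A}$; $\mathfrak{A}$ is symmetrically pseudo-amenable if it has one. *)

From HB Require Import structures.
From mathcomp Require Import all_boot all_order all_algebra.
From mathcomp Require Import all_classical all_reals all_analysis.
From mathcomp Require Export complex.
Set Implicit Arguments. Unset Strict Implicit. Unset Printing Implicit Defensive.
Import Order.TTheory GRing.Theory Num.Theory.
Local Open Scope ring_scope.

Section Defs.
Variable R : realType.
Local Notation K := (R[i]).

Definition banach_algebra_mul (A : completeNormedModType K) (mul : A -> A -> A)
  : Prop :=
  (forall a b c, mul a (mul b c) = mul (mul a b) c) /\
  (forall a b c, mul (a + b) c = mul a c + mul b c) /\
  (forall a b c, mul a (b + c) = mul a b + mul a c) /\
  (forall (k : K) a b, mul (k *: a) b = k *: mul a b) /\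
  (forall (k : K) a b, mul a (k *: b) = k *: mul a b) /\
  (forall a b, `|mul a b| <= `|a| * `|b|).

Definition banach_bimodule (A : completeNormedModType K) (mul : A -> A -> A)
  (Y : completeNormedModType K) (la : A -> Y -> Y) (ra : Y -> A -> Y) : Prop :=
  (forall (k : K) a b y, la (k *: a + b) y = k *: la a y + la b y) /\
  (forall (k : K) a y z, la a (k *: y + z) = k *: la a y + la a z) /\
  (forall (k : K) a b y, ra y (k *: a + b) = k *: ra y a + ra y b) /\
  (forall (k : K) a y z, ra (k *: y + z) a = k *: ra y a + ra z a) /\
  (forall a b y, la (mul a b) y = la a (la b y)) /\
  (forall a b y, ra y (mul a b) = ra (ra y a) b) /\
  (forall a b y, ra (la a y) b = la a (ra y b)) /\
  (exists C : K, 0 <= C /\ forall a y,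
      `|la a y| <= C * `|a| * `|y| /\ `|ra y a| <= C * `|a| * `|y|).

Definition closed_subbimodule (A : completeNormedModType K)
  (Y : completeNormedModType K) (la : A -> Y -> Y) (ra : Y -> A -> Y)
  (X : set Y) : Prop :=
  [/\ closed X, X 0,
      (forall (k : K) x y, X x -> X y -> X (k *: x + y)),
      (forall a x, X x -> X (la a x)) &
      (forall a x, X x -> X (ra x a))].

Definition centre_in (A : Type) (Y : Type) (la : A -> Y -> Y) (ra : Y -> A -> Y)
  (S : set Y) : set Y :=
  [set y | S y /\ forall a, la a y = ra y a].

Definition is_linear (V W : lmodType K) (f : V -> W) : Prop :=
  forall (k : K) x y, f (k *: x + y) = k *: f x + f y.

Definition is_derivation (A : completeNormedModType K) (mul : A -> A -> A)
  (Y : completeNormedModType K) (la : A -> Y -> Y) (ra : Y -> A -> Y)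
  (d : A -> Y) : Prop :=
  is_linear d /\ forall a b, d (mul a b) = ra (d a) b + la a (d b).

Definition is_bounded (A Y : normedModType K) (f : A -> Y) : Prop :=
  exists M : K, 0 <= M /\ forall a, `|f a| <= M * `|a|.

(* Unitization U# = U (+) C 1 with the l^1 norm.                       *)
Definition unitization_mul (A : completeNormedModType K) (mul : A -> A -> A)
  (x y : A * K) : A * K :=
  (mul x.1 y.1 + x.2 *: y.1 + y.2 *: x.1, x.2 * y.2).

Definition unitization_norm (A : completeNormedModType K) (x : A * K) : K :=
  `|x.1| + `|x.2|.

(* Projective tensor product V (x^) V of a Banach algebra V with norm  *)
(* N.  An element is represented by a sequence (a_n, b_n) with         *)
(* sum_n N a_n * N b_n < oo, standing for sum_n a_n (x) b_n.  The      *)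
(* projective norm of an element u is sup |B(u)| over bounded bilinear *)
(* forms B of norm <= 1 (the dual of V (x^) V), where                  *)
(* B(sum a_n (x) b_n) = sum B(a_n,b_n).                                *)
Variable V : lmodType K.
Variable N : V -> K.
Variable mul : V -> V -> V.

Definition series_to (W : zmodType) (nW : W -> K) (u : nat -> W) (s : W) : Prop :=
  forall e : K, 0 < e -> exists M : nat, forall n : nat, (M <= n)%N ->
    nW (\sum_(i < n) u i - s) < e.

Definition ptensor := nat -> V * V.

Definition ptensor_ok (t : ptensor) : Prop :=
  exists Bd : K, forall n, \sum_(i < n) N (t i).1 * N (t i).2 <= Bd.

Definition bilin_ball (B : V -> V -> K) : Prop :=
  [/\ (forall y, is_linear (fun x : V => (B x y : K^o))),
      (forall x, is_linear (fun y : V => (B x y : K^o))) &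
      (forall x y, `|B x y| <= N x * N y)].

Definition tensor_eval (B : V -> V -> K) (t : ptensor) (s : K) : Prop :=
  series_to (fun z : K => `|z|) (fun n => B (t n).1 (t n).2) s.

Definition ptensor_dist_le (t1 t2 : ptensor) (e : K) : Prop :=
  forall B, bilin_ball B -> exists s1 s2,
    [/\ tensor_eval B t1 s1, tensor_eval B t2 s2 & `|s1 - s2| <= e].

Definition ptensor_flip (t : ptensor) : ptensor := fun n => ((t n).2, (t n).1).

Definition ptensor_symmetric (t : ptensor) : Prop :=
  forall B, bilin_ball B -> exists s, tensor_eval B t s /\ tensor_eval B (ptensor_flip t) s.

Definition ptensor_lmul (a : V) (t : ptensor) : ptensor :=
  fun n => (mul a (t n).1, (t n).2).
Definition ptensor_rmul (t : ptensor) (a : V) : ptensor :=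
  fun n => ((t n).1, mul (t n).2 a).

Definition ptensor_pi (t : ptensor) (p : V) : Prop :=
  series_to N (fun n => mul (t n).1 (t n).2) p.

Definition directed_set (I : Type) (le : I -> I -> Prop) : Prop :=
  [/\ inhabited I, (forall i, le i i),
      (forall i j k, le i j -> le j k -> le i k) &
      (forall i j, exists k, le i k /\ le j k)].

(* V is symmetrically pseudo-amenable: it has a (not necessarily bounded)
   net of symmetric elements t_l of V (x^) V with a t_l - t_l a -> 0 and
   pi(t_l) a -> a for all a. *)
Definition sym_pseudo_amenable : Prop :=
  exists (I : Type) (le : I -> I -> Prop) (t : I -> ptensor),
  [/\ directed_set le,
      (forall i, ptensor_ok (t i) /\ ptensor_symmetric (t i)) &
      (forall (a : V) (e : K), 0 < e -> exists i0, forall i, le i0 i ->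
          ptensor_dist_le (ptensor_lmul a (t i)) (ptensor_rmul (t i) a) e /\
          exists p, ptensor_pi (t i) p /\ N (mul p a - a) <= e)].

End Defs.

From HB Require Import structures.
From mathcomp Require Import all_boot all_order all_algebra.
From mathcomp Require Import all_classical all_reals all_analysis.
From mathcomp Require Import complex.
From mathcomp Require Import ring lra.
Import Order.TTheory GRing.Theory Num.Theory.
Local Open Scope ring_scope.
Local Open Scope classical_set_scope.
Set Implicit Arguments. Unset Strict Implicit. Unset Printing Implicit Defensive.

(* If [d c] were outside [X], Hahn-Banach would give a bounded functional [phi]
   vanishing on [X] with [phi (d c) <> 0].  Extend [d] by [0] on the adjoined
   unit of the unitization and put [B(x, y) = psi (x . d y)].  Since [d + tau]
   maps into [X] and [tau] is central, [d u . v - v . d u] lies in [X], so for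
   [psi] vanishing on [X] the derivation rule reads
   [psi (d (x y)) = B(x, y) + B(y, x)]; on a symmetric tensor [t] with
   [pi t = p] this gives [2 B(t) = psi (d (p - 1))], which is small.  With
   [psi = phi], expanding [B(c t) - B(t c)] writes [phi (d c)] in terms of
   [|c t - t c|], of two such [B(t)] (for [phi (c . _)] and [phi (_ . c)]) and
   of [phi ((p - 1) . d c)], hence [phi (d c) = 0].  Finally
   [tau a = (d a + tau a) - d a] lies in [X]. *)

Section IsLinear.
Variables (R : realType) (U W : lmodType R[i]) (f : U -> W).
Hypothesis f_lin : is_linear f.

Lemma is_linear0 : f 0 = 0.
Proof.
apply/eqP; have := f_lin 1 0 0; rewrite !scale1r addr0 => /eqP.
by rewrite addrC -subr_eq subrr eq_sym.
Qed.

Lemma is_linearD x y : f (x + y) = f x + f y.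
Proof. by have := f_lin 1 x y; rewrite !scale1r. Qed.

Lemma is_linearZ k x : f (k *: x) = k *: f x.
Proof. by have := f_lin k x 0; rewrite !addr0 is_linear0 addr0. Qed.

Lemma is_linearB x y : f (x - y) = f x - f y.
Proof. by rewrite is_linearD -scaleN1r is_linearZ scaleN1r. Qed.

Lemma is_linear_sum n (F : nat -> U) : f (\sum_(i < n) F i) = \sum_(i < n) f (F i).
Proof.
elim: n => [|n IH]; first by rewrite !big_ord0 is_linear0.
by rewrite !big_ord_recr /= is_linearD IH.
Qed.
End IsLinear.

Definition linear_functional (R : realType) (U : lmodType R[i]) (f : U -> R[i]) :=
  forall (k : R[i]) x y, f (k *: x + y) = k * f x + f y.

Section LinearFunctional.
Variables (R : realType) (U : lmodType R[i]) (f : U -> R[i]).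
Hypothesis f_lin : linear_functional f.

Lemma linear_functional_is_linear : is_linear (f : U -> R[i]^o).
Proof. exact: f_lin. Qed.

Lemma linear_functional0 : f 0 = 0.
Proof. exact: (is_linear0 linear_functional_is_linear). Qed.

Lemma linear_functionalD x y : f (x + y) = f x + f y.
Proof. exact: (is_linearD linear_functional_is_linear). Qed.

Lemma linear_functionalB x y : f (x - y) = f x - f y.
Proof. exact: (is_linearB linear_functional_is_linear). Qed.
End LinearFunctional.

Section ComplexRe.
Variable R : realType.
Local Notation Re := complex.Re.

Lemma ReD (a b : R[i]) : Re (a + b) = Re a + Re b.
Proof. by case: a => ? ?; case: b. Qed.

Lemma Re_lec (a b : R[i]) : a <= b -> Re a <= Re b.
Proof. by rewrite lecE => /andP[]. Qed.

Lemma nneg_lecE (a b : R[i]) : 0 <= a -> 0 <= b -> (a <= b) = (Re a <= Re b).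
Proof. by move=> a0 b0; rewrite lecE (ger0_Im a0) (ger0_Im b0) eqxx. Qed.
End ComplexRe.

(* The real structure of [V] is encoded by letting [t : R] act as [t%:C]. *)
Section RealHahnBanach.
Local Open Scope complex_scope.
Variables (R : realType) (V : lmodType R[i]) (p : V -> R).
Hypothesis p_subadd : forall x y, p (x + y) <= p x + p y.
Hypothesis p_homog : forall (t : R) x, 0 <= t -> p (t%:C *: x) = t * p x.

Definition real_subspace (W : set V) :=
  W 0 /\ forall (t : R) x y, W x -> W y -> W (t%:C *: x + y).

Definition real_linear_on (W : set V) (g : V -> R) :=
  forall (t : R) x y, W x -> W y -> g (t%:C *: x + y) = t * g x + g y.

Definition dominated_on (W : set V) (g : V -> R) := forall x, W x -> g x <= p x.

Definition add_line (W : set V) (v : V) : set V :=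
  [set u | exists w (t : R), W w /\ u = w + t%:C *: v].

Section Subspace.
Variables (W : set V) (g : V -> R).
Hypotheses (W_sub : real_subspace W) (g_lin : real_linear_on W g).

Lemma real_subspaceZ t x : W x -> W (t%:C *: x).
Proof. by case: W_sub => W0 WD Wx; have := WD t x 0 Wx W0; rewrite addr0. Qed.

Lemma real_subspaceD x y : W x -> W y -> W (x + y).
Proof. by case: W_sub => _ WD Wx Wy; have := WD 1 x y Wx Wy; rewrite scale1r. Qed.

Lemma real_subspaceB x y : W x -> W y -> W (x - y).
Proof.
move=> Wx Wy; apply: real_subspaceD => //.
by rewrite -scaleN1r -(rmorphN1 (@complex.real_complex R)); apply: real_subspaceZ.
Qed.

Lemma real_linear_on0 : g 0 = 0.
Proof.
have W0 := W_sub.1; have := g_lin 1 W0 W0.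
rewrite scale1r addr0 mul1r; lra.
Qed.

Lemma real_linear_onZ t x : W x -> g (t%:C *: x) = t * g x.
Proof.
by move=> Wx; have := g_lin t Wx W_sub.1; rewrite addr0 real_linear_on0 addr0.
Qed.

Lemma real_linear_onD x y : W x -> W y -> g (x + y) = g x + g y.
Proof. by move=> Wx Wy; have := g_lin 1 Wx Wy; rewrite scale1r mul1r. Qed.

Lemma add_line_unique v w1 w2 (t1 t2 : R) : ~ W v -> W w1 -> W w2 ->
  w1 + t1%:C *: v = w2 + t2%:C *: v -> t1 = t2 /\ w1 = w2.
Proof.
move=> Wv W1 W2 e; suff t12 : t1 = t2 by split => //; move: e; rewrite t12 => /addIr.
apply/eqP/negPn/negP => t12; apply: Wv.
have t21 : t2 - t1 != 0 by rewrite subr_eq0 eq_sym.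
have e' : (t2 - t1)%:C *: v = w1 - w2.
  by rewrite rmorphB scalerBl; apply/eqP; rewrite subr_eq addrAC e addrAC subrr add0r.
have -> : v = (t2 - t1)^-1%:C *: (w1 - w2).
  by rewrite -e' scalerA -rmorphM mulVf // scale1r.
by apply: real_subspaceZ; apply: real_subspaceB.
Qed.

Lemma real_subspace_add_line v : real_subspace (add_line W v).
Proof.
split; first by exists 0, 0; rewrite scale0r addr0; split => //; case: W_sub.
move=> t _ _ [w1 [t1 [W1 ->]]] [w2 [t2 [W2 ->]]].
exists (t%:C *: w1 + w2), (t * t1 + t2); split; first by case: W_sub => _; apply.
by rewrite rmorphD rmorphM scalerDr scalerDl scalerA addrACA.
Qed.

Lemma add_line_l v : W `<=` add_line W v.
Proof. by move=> w Ww; exists w, 0; rewrite scale0r addr0. Qed.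

Lemma add_line_r v : add_line W v v.
Proof. by exists 0, 1; rewrite scale1r add0r; split => //; case: W_sub. Qed.

Hypothesis g_dom : dominated_on W g.

Lemma dominated_along v c : (forall w, W w -> g w + c <= p (w + v)) ->
  forall w (t : R), W w -> 0 < t -> g w + t * c <= p (w + t%:C *: v).
Proof.
move=> gc w t Ww t0; have tN0 : t != 0 by rewrite gt_eqF.
pose w' := t^-1%:C *: w; have Ww' : W w' by apply: real_subspaceZ.
have -> : w + t%:C *: v = t%:C *: (w' + v).
  by rewrite scalerDr scalerA -rmorphM mulfV // scale1r.
have -> : g w = t * g w'.
  by rewrite real_linear_onZ // mulrA mulfV // mul1r.
by rewrite p_homog ?(ltW t0) // -mulrDr ler_pM2l ?gc.
Qed.

Variable v : V.

Lemma extension_window : exists c,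
  (forall w, W w -> g w + c <= p (w + v)) /\ (forall w, W w -> g w - c <= p (w - v)).
Proof.
have key w1 w2 : W w1 -> W w2 -> g w1 - p (w1 - v) <= p (w2 + v) - g w2.
  move=> W1 W2; have := g_dom (real_subspaceD W1 W2).
  have : p (w1 + w2) <= p (w1 - v) + p (w2 + v).
    by rewrite -[in X in p X <= _](subrK v w1) -addrA [v + _]addrC p_subadd.
  rewrite real_linear_onD //; lra.
have W0 := W_sub.1.
pose S := [set x | exists2 w, W w & x = g w - p (w - v)].
have S_sup : has_sup S.
  split; first by exists (g 0 - p (0 - v)), 0.
  by exists (p (0 + v) - g 0) => x [w Ww ->]; apply: key.
exists (sup S); split => w Ww.
  suff : sup S <= p (w + v) - g w by lra.
  by apply: ge_sup; [case: S_sup | move=> x [w' W' ->]; apply: key].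
suff : g w - p (w - v) <= sup S by lra.
by apply: sup_upper_bound => //; exists w.
Qed.

Hypothesis Wv : ~ W v.

Lemma extension_step c :
  (forall w, W w -> g w + c <= p (w + v)) -> (forall w, W w -> g w - c <= p (w - v)) ->
  exists g', [/\ real_linear_on (add_line W v) g',
    (forall w (t : R), W w -> g' (w + t%:C *: v) = g w + t * c) &
    dominated_on (add_line W v) g'].
Proof.
move=> c_le c_ge.
pose g' u := if pselect (exists wt : V * R, W wt.1 /\ u = wt.1 + wt.2%:C *: v)
  is left h then let wt := projT1 (cid h) in g wt.1 + wt.2 * c else 0.
have g'E w (t : R) : W w -> g' (w + t%:C *: v) = g w + t * c.
  move=> Ww; rewrite /g'; case: pselect => [h|[]]; last by exists (w, t).
  case: (cid h) => [[w' t'] [/= W' e]] /=.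
  by have [-> ->] := add_line_unique Wv Ww W' e.
exists g'; split => //.
- move=> s _ _ [w1 [t1 [W1 ->]]] [w2 [t2 [W2 ->]]].
  have -> : s%:C *: (w1 + t1%:C *: v) + (w2 + t2%:C *: v) =
      (s%:C *: w1 + w2) + (s * t1 + t2)%:C *: v.
    by rewrite rmorphD rmorphM scalerDr scalerDl scalerA addrACA.
  rewrite !g'E // ?g_lin //; first by ring.
  by case: W_sub => _; apply.
- move=> _ [w [t [Ww ->]]]; rewrite g'E //.
  have [t0|t0|->] := ltgtP t 0; last by rewrite scale0r mul0r !addr0 g_dom.
    have -> : w + t%:C *: v = w + (- t)%:C *: (- v) by rewrite rmorphN scaleNr scalerN opprK.
    by rewrite -mulrNN; apply: (dominated_along c_ge); rewrite ?oppr_gt0.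
  exact: (dominated_along c_le).
Qed.
End Subspace.

Section Zorn.
Variables (W0 : set V) (g0 : V -> R).
Hypotheses (W0_sub : real_subspace W0) (g0_lin : real_linear_on W0 g0).
Hypothesis g0_dom : dominated_on W0 g0.

Record dominated_ext := DominatedExt {
  ext_dom : set V; ext_fun : V -> R;
  ext_sub : real_subspace ext_dom; ext_lin : real_linear_on ext_dom ext_fun;
  ext_le_p : dominated_on ext_dom ext_fun;
  ext_dom0 : W0 `<=` ext_dom; ext_fun0 : forall x, W0 x -> ext_fun x = g0 x }.

Definition ext_le (e1 e2 : dominated_ext) : bool :=
  `[< (ext_dom e1 `<=` ext_dom e2)%classic /\
      forall x, ext_dom e1 x -> ext_fun e2 x = ext_fun e1 x >].

Lemma ext_le_refl e : ext_le e e.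
Proof. by apply/asboolP; split. Qed.

Lemma ext_le_trans e1 e2 e3 : ext_le e1 e2 -> ext_le e2 e3 -> ext_le e1 e3.
Proof.
move=> /asboolP [s12 f12] /asboolP [s23 f23]; apply/asboolP; split => [x /s12/s23 //|x e1x].
by rewrite f23 ?f12 //; apply: s12.
Qed.

Lemma ext_chain_ub (A : set dominated_ext) : total_on A ext_le ->
  exists e, forall e', A e' -> ext_le e' e.
Proof.
move=> A_tot; have [[e0 Ae0]|A0] := pselect (exists e, A e); last first.
  exists (DominatedExt W0_sub g0_lin g0_dom (@subset_refl _ W0) (fun x _ => erefl)).
  by move=> e Ae; case: A0; exists e.
pose W := [set x | exists e, A e /\ ext_dom e x].
pose g x := if pselect (exists e, A e /\ ext_dom e x) is left h
  then ext_fun (projT1 (cid h)) x else 0.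
have gE e x : A e -> ext_dom e x -> g x = ext_fun e x.
  move=> Ae ex; rewrite /g; case: pselect => [h|[]]; last by exists e.
  case: (cid h) => e' [Ae' e'x] /=.
  by have [/asboolP [_ ->]|/asboolP [_ ->]] := A_tot _ _ Ae Ae'.
have common e1 e2 x y : A e1 -> A e2 -> ext_dom e1 x -> ext_dom e2 y ->
    exists e, [/\ A e, ext_dom e x & ext_dom e y].
  move=> A1 A2 x1 y2; have [/asboolP [s12 _]|/asboolP [s21 _]] := A_tot _ _ A1 A2.
    by exists e2; split => //; apply: s12.
  by exists e1; split => //; apply: s21.
have W_sub : real_subspace W.
  split; first by exists e0; split => //; case: (ext_sub e0).
  move=> t x y [e1 [A1 x1]] [e2 [A2 y2]]; have [e [Ae ex ey]] := common _ _ _ _ A1 A2 x1 y2.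
  by exists e; split => //; case: (ext_sub e) => _; apply.
have g_lin : real_linear_on W g.
  move=> t x y [e1 [A1 x1]] [e2 [A2 y2]]; have [e [Ae ex ey]] := common _ _ _ _ A1 A2 x1 y2.
  have exy : ext_dom e (t%:C *: x + y) by case: (ext_sub e) => _; apply.
  by rewrite !(gE e) // ext_lin.
have g_dom : dominated_on W g by move=> x [e [Ae ex]]; rewrite (gE e) // ext_le_p.
have W0W : W0 `<=` W by move=> x W0x; exists e0; split => //; apply: ext_dom0.
have g_g0 x : W0 x -> g x = g0 x.
  by move=> W0x; rewrite (gE e0) ?ext_fun0 //; apply: ext_dom0.
exists (DominatedExt W_sub g_lin g_dom W0W g_g0) => e Ae.
by apply/asboolP; split => [x ex|x ex]; [exists e | apply: gE].
Qed.

Lemma maximal_ext_total e : (forall e', ext_le e e' -> ext_le e' e) -> ext_dom e = setT.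
Proof.
move=> e_max; apply/seteqP; split => // v _; apply: contrapT => ev.
have [c [c_le c_ge]] := extension_window (ext_sub e) (@ext_lin e) (@ext_le_p e) v.
have [g' [g'_lin g'E g'_dom]] :=
  extension_step (ext_sub e) (@ext_lin e) (@ext_le_p e) ev c_le c_ge.
have g'_e x : ext_dom e x -> g' x = ext_fun e x.
  by move=> ex; have := g'E x 0 ex; rewrite scale0r mul0r !addr0.
have W0e' : W0 `<=` add_line (ext_dom e) v by move=> x W0x; apply: add_line_l; apply: ext_dom0.
have g'_g0 x : W0 x -> g' x = g0 x.
  by move=> W0x; rewrite g'_e ?ext_fun0 //; apply: ext_dom0.
pose e' := DominatedExt (real_subspace_add_line (ext_sub e) v) g'_lin g'_dom W0e' g'_g0.
have /e_max /asboolP [/= e'e _] : ext_le e e'.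
  by apply/asboolP; split => //=; apply: add_line_l.
by apply: ev; apply: e'e; apply: add_line_r; apply: ext_sub.
Qed.

Lemma real_hahn_banach : exists g : V -> R,
  [/\ real_linear_on setT g, (forall x, W0 x -> g x = g0 x) & dominated_on setT g].
Proof.
have [e e_max] := ZL_preorder
  (DominatedExt W0_sub g0_lin g0_dom (@subset_refl _ W0) (fun x _ => erefl))
  ext_le_refl ext_le_trans ext_chain_ub.
have e_tot := maximal_ext_total e_max.
exists (ext_fun e); split; last 1 first.
- by move=> x _; apply: ext_le_p; rewrite e_tot.
- by move=> t x y _ _; apply: ext_lin; rewrite e_tot.
- exact: ext_fun0.
Qed.
End Zorn.
End RealHahnBanach.

Section Complexify.
Local Open Scope complex_scope.
Local Notation Re := complex.Re.
Local Notation Im := complex.Im.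
Variables (R : realType) (Y : normedModType R[i]) (g : Y -> R).
Hypothesis g_lin : real_linear_on setT g.
Hypothesis g_dom : dominated_on (fun y => Re `|y|) setT g.

Definition complexify (y : Y) : R[i] := (g y)%:C - 'i%C * (g ('i%C *: y))%:C.

Lemma Re_complexify y : Re (complexify y) = g y.
Proof. by rewrite /= mul0r mul1r !subr0. Qed.

Lemma complexify_linear : linear_functional complexify.
Proof.
have T_sub : real_subspace [set: Y] by [].
have gD x y : g (x + y) = g x + g y by exact: (real_linear_onD g_lin).
have gZ (t : R) x : g (t%:C *: x) = t * g x by exact: (real_linear_onZ T_sub g_lin).
have i2 : 'i%C ^+ 2 = -1 :> R[i] := sqr_i R.
move=> k x y; rewrite /complexify.
have ek := complexE k; set a := Re k in ek; set b := Im k in ek.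
have e1 : k *: x + y = a%:C *: x + (b%:C *: ('i%C *: x) + y).
  by rewrite addrA scalerA (mulrC b%:C) -scalerDl -ek.
have e2 : 'i%C *: (k *: x + y) = a%:C *: ('i%C *: x) + ((- b)%:C *: x + 'i%C *: y).
  rewrite scalerDr !scalerA addrA -scalerDl; congr (_ *: _ + _).
  rewrite {1}ek rmorphN -[- _]mulN1r -i2; ring.
rewrite e2 e1 !gD !gZ ek; clearbody a b.
apply/eqP; rewrite -subr_eq0; apply/eqP.
transitivity (('i%C ^+ 2 + 1) * (b%:C * (g ('i%C *: x))%:C)).
  by rewrite !(rmorphD, rmorphM, rmorphN); ring.
by rewrite i2 addNr mul0r.
Qed.

Lemma complexify_norm y : `|complexify y| <= `|y|.
Proof.
have [->|z0] := eqVneq (complexify y) 0; first by rewrite normr0 normr_ge0.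
set z := complexify y in z0 *; pose u := `|z| / z.
have u1 : `|u| = 1 by rewrite /u normf_div normr_id divff // normr_eq0.
have uz : complexify (u *: y) = `|z|.
  rewrite -[u *: y]addr0 complexify_linear (linear_functional0 complexify_linear).
  by rewrite addr0 mulfVK.
have := @g_dom (u *: y) I; rewrite -Re_complexify uz normrZ u1 mul1r.
by rewrite nneg_lecE.
Qed.
End Complexify.

Section Separation.
Local Open Scope complex_scope.
Local Notation Re := complex.Re.
Variables (R : realType) (Y : normedModType R[i]).

Lemma closed_dist_gt0 (X : set Y) y0 : closed X -> ~ X y0 ->
  exists2 e : R[i], 0 < e & forall x, X x -> e <= `|y0 - x|.
Proof.
move=> X_closed Xy0; apply: contrapT => no_e; apply: Xy0; apply: X_closed.
move=> B /nbhs_ballP [e e0 eB]; have /existsNP [x /not_implyP [Xx /negP ex]] :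
  ~ (forall x, X x -> e <= `|y0 - x|) by move=> h; apply: no_e; exists e.
exists x; split => //; apply: eB; rewrite -ball_normE /ball_ /=.
by rewrite real_ltNge ?ex ?normr_real ?gtr0_real.
Qed.

Let p (y : Y) := Re `|y|.

Lemma Re_norm_subadd x y : p (x + y) <= p x + p y.
Proof. by rewrite /p -ReD; apply/Re_lec/ler_normD. Qed.

Lemma Re_norm_homog (t : R) x : 0 <= t -> p (t%:C *: x) = t * p x.
Proof.
move=> t0; rewrite /p normrZ ger0_norm ?ler0c //.
by case: `|x| => a b /=; rewrite mul0r subr0.
Qed.

Lemma hahn_banach_separation (X : set Y) y0 : closed X -> X 0 ->
  (forall (k : R[i]) x y, X x -> X y -> X (k *: x + y)) -> ~ X y0 ->
  exists phi : Y -> R[i], [/\ linear_functional phi, (forall y, `|phi y| <= `|y|),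
    (forall x, X x -> phi x = 0) & phi y0 != 0].
Proof.
move=> X_closed X0 X_lin Xy0; have [e e0 e_dist] := closed_dist_gt0 X_closed Xy0.
have Re_e0 : 0 < Re e by move: e0; rewrite ltcE => /andP[].
have X_sub : real_subspace X by split => // t; apply: X_lin.
have zero_lin : real_linear_on X (fun _ => 0 : R) by move=> *; rewrite mulr0 addr0.
have zero_dom : dominated_on p X (fun _ => 0) by move=> x _; exact: (Re_lec (normr_ge0 x)).
have c_le w : X w -> 0 + - Re e <= p (w + y0).
  by move=> _; rewrite add0r; apply: (le_trans (y := 0)); [lra | exact: (Re_lec (normr_ge0 _))].
have c_ge w : X w -> 0 - - Re e <= p (w - y0).
  by move=> Xw; rewrite sub0r opprK /p distrC; apply/Re_lec/e_dist.
have [g1 [g1_lin g1E g1_dom]] := extension_step Re_norm_homog X_sub zero_lin zero_dom Xy0 c_le c_ge.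
have [g [g_lin g_g1 g_dom]] := real_hahn_banach Re_norm_subadd Re_norm_homog
  (real_subspace_add_line X_sub y0) g1_lin g1_dom.
have g0 x : X x -> g x = 0.
  move=> Xx; rewrite g_g1; last exact: add_line_l.
  by have := g1E x 0 Xx; rewrite scale0r mul0r !addr0.
have gy0 : g y0 = - Re e.
  rewrite g_g1; last by apply: add_line_r.
  by have := g1E 0 1 X0; rewrite scale1r mul1r !add0r.
exists (complexify g); split.
- exact: complexify_linear.
- exact: complexify_norm.
- move=> x Xx; rewrite /complexify !g0 ?mulr0 ?subr0 //.
  by rewrite -[_ *: x]addr0; apply: X_lin.
- apply/eqP => /(congr1 (@complex.Re R)); rewrite Re_complexify gy0 /=; lra.
Qed.
End Separation.

Section SeriesTo.
Variable R : realType.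
Local Notation K := R[i].
Local Notation norm := (fun z : K => `|z|).

Lemma eq0_norm_le_eps (z C : K) : 0 <= C -> (forall e : K, 0 < e -> `|z| <= C * e) -> z = 0.
Proof.
move=> C0 zC; apply/normr0_eq0/eqP; rewrite eq_le normr_ge0 andbT.
apply/ler_addgt0Pr => e e0; rewrite add0r.
have C1 : 0 < C + 1 by rewrite ltr_wpDl.
apply: (le_trans (zC _ (divr_gt0 e0 C1))).
by rewrite mulrA ler_pdivrMr // mulrDr mulr1 mulrC lerDl ltW.
Qed.

Lemma series_to_unique (u : nat -> K) s1 s2 :
  series_to norm u s1 -> series_to norm u s2 -> s1 = s2.
Proof.
move=> us1 us2; apply/eqP; rewrite -subr_eq0; apply/eqP.
apply: (@eq0_norm_le_eps _ 2) => // e e0.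
have [M1 uM1] := us1 e e0; have [M2 uM2] := us2 e e0.
have := uM1 (maxn M1 M2) (leq_maxl _ _); have := uM2 (maxn M1 M2) (leq_maxr _ _).
set S := \sum_(i < maxn M1 M2) u i => S2 S1.
have -> : s1 - s2 = (S - s2) - (S - s1) by ring.
by rewrite mulr2n mulrDl mul1r; apply: (le_trans (ler_normB _ _)); apply: lerD; apply: ltW.
Qed.

Lemma eq_series_to (u v : nat -> K) s :
  u =1 v -> series_to norm u s -> series_to norm v s.
Proof. by move=> /funext ->. Qed.

Lemma series_toD (u v : nat -> K) s1 s2 : series_to norm u s1 -> series_to norm v s2 ->
  series_to norm (fun n => u n + v n) (s1 + s2).
Proof.
move=> us1 vs2 e e0; have e2 : 0 < e / 2 by rewrite divr_gt0.
have [M1 uM1] := us1 _ e2; have [M2 vM2] := vs2 _ e2.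
exists (maxn M1 M2) => n; rewrite geq_max => /andP[M1n M2n].
rewrite big_split /= opprD addrACA (splitr e).
by apply: (le_lt_trans (ler_normD _ _)); apply: ltrD; [apply: uM1 | apply: vM2].
Qed.

Section BoundedLinearImage.
Variables (V : lmodType K) (N : V -> K) (f : V -> K) (C : K).
Hypotheses (f_lin : linear_functional f) (C0 : 0 <= C) (f_bound : forall x, `|f x| <= C * N x).

Lemma series_to_linear (w : nat -> V) s :
  series_to N w s -> series_to norm (fun n => f (w n)) (f s).
Proof.
move=> ws e e0; have C1 : 0 < C + 1 by rewrite ltr_wpDl.
have [M wM] := ws _ (divr_gt0 e0 C1); exists M => n Mn.
rewrite -(is_linear_sum (linear_functional_is_linear f_lin)).
rewrite -(linear_functionalB f_lin); apply: (le_lt_trans (f_bound _)).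
apply: (le_lt_trans (ler_wpM2l C0 (ltW (wM n Mn)))).
by rewrite mulrA ltr_pdivrMr // mulrDr mulr1 mulrC ltrDl.
Qed.
End BoundedLinearImage.

Lemma series_toZ (u : nat -> K) s k :
  series_to norm u s -> series_to norm (fun n => k * u n) (k * s).
Proof.
apply: (series_to_linear (V := K^o) (C := `|k|)) => //.
  by move=> a x y; change (k * (a * x + y) = a * (k * x) + k * y); ring.
by move=> x; rewrite normrM.
Qed.
End SeriesTo.

Section BoundedBilinearForm.
Variable R : realType.
Local Notation K := R[i].
Variables (V : lmodType K) (N : V -> K) (B : V -> V -> K) (Kb : K).
Hypothesis B_linl : forall y, linear_functional (B^~ y).
Hypothesis B_linr : forall x, linear_functional (B x).
Hypothesis Kb_gt0 : 0 < Kb.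
Hypothesis B_bound : forall x y, `|B x y| <= Kb * (N x * N y).

Let B1 x y := B x y / Kb.

Lemma bilin_ball_scaled : bilin_ball N B1.
Proof.
split=> [y k x x'|x k y y'|x y]; rewrite /B1.
- by rewrite B_linl /GRing.scale /= mulrDl mulrA.
- by rewrite B_linr /GRing.scale /= mulrDl mulrA.
- by rewrite normrM normfV (gtr0_norm Kb_gt0) ler_pdivrMr // mulrC.
Qed.

Lemma tensor_eval_unscale t s : tensor_eval B1 t s -> tensor_eval B t (Kb * s).
Proof.
move=> /(series_toZ Kb); apply: eq_series_to => n.
by rewrite /B1 mulrC divfK // gt_eqF.
Qed.

Lemma ptensor_symmetric_eval t : ptensor_symmetric N t ->
  exists s, tensor_eval B t s /\ tensor_eval B (ptensor_flip t) s.
Proof.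
move=> /(_ _ bilin_ball_scaled) [s [ts fts]].
by exists (Kb * s); split; apply: tensor_eval_unscale.
Qed.

Lemma ptensor_dist_le_eval t1 t2 e : ptensor_dist_le N t1 t2 e ->
  exists s1 s2, [/\ tensor_eval B t1 s1, tensor_eval B t2 s2 & `|s1 - s2| <= Kb * e].
Proof.
move=> /(_ _ bilin_ball_scaled) [s1 [s2 [ts1 ts2 s12]]].
exists (Kb * s1), (Kb * s2); split; try exact: tensor_eval_unscale.
by rewrite -mulrBr normrM (gtr0_norm Kb_gt0) ler_pM2l.
Qed.
End BoundedBilinearForm.

Section UnitizationAction.
Variable R : realType.
Local Notation K := R[i].
Variables (A : completeNormedModType K) (mul : A -> A -> A).
Variables (Y : completeNormedModType K) (la : A -> Y -> Y) (ra : Y -> A -> Y).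
Hypothesis mulDr : forall a b c, mul a (b + c) = mul a b + mul a c.
Hypothesis laL : forall (k : K) a b y, la (k *: a + b) y = k *: la a y + la b y.
Hypothesis laR : forall (k : K) a y z, la a (k *: y + z) = k *: la a y + la a z.
Hypothesis raR : forall (k : K) a y z, ra (k *: y + z) a = k *: ra y a + ra z a.
Hypothesis laM : forall a b y, la (mul a b) y = la a (la b y).
Hypothesis la_ra : forall a b y, ra (la a y) b = la a (ra y b).
Variable C : K.
Hypothesis C0 : 0 <= C.
Hypothesis la_ra_bound :
  forall a y, `|la a y| <= C * `|a| * `|y| /\ `|ra y a| <= C * `|a| * `|y|.
Variable d : A -> Y.
Hypothesis d_lin : is_linear d.
Hypothesis d_der : forall a b, d (mul a b) = ra (d a) b + la a (d b).

Local Notation N := (@unitization_norm R A).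
Local Notation mulU := (unitization_mul mul).

Definition one_sharp : A * K := (0, 1).
Definition la_sharp (u : A * K) (y : Y) : Y := la u.1 y + u.2 *: y.
Definition ra_sharp (y : Y) (u : A * K) : Y := ra y u.1 + u.2 *: y.
Definition d_sharp (u : A * K) : Y := d u.1.

Lemma unitization_norm_ge0 u : 0 <= N u.
Proof. by rewrite addr_ge0. Qed.

Lemma unitization_mul1 u : mulU u one_sharp = u.
Proof.
have mul0 a : mul a 0 = 0.
  by apply: (@addrI _ (mul a 0)); rewrite -mulDr !addr0.
by case: u => a l; rewrite /unitization_mul /= mul0 scaler0 add0r scale1r mulr1 add0r.
Qed.

Lemma laDl a b y : la (a + b) y = la a y + la b y.
Proof. exact: (is_linearD (f := la^~ y) (fun k a b => laL k a b y)). Qed.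
Lemma laZl k a y : la (k *: a) y = k *: la a y.
Proof. exact: (is_linearZ (f := la^~ y) (fun k a b => laL k a b y)). Qed.
Lemma laDr a y z : la a (y + z) = la a y + la a z.
Proof. exact: (is_linearD (laR^~ a)). Qed.
Lemma laZr k a y : la a (k *: y) = k *: la a y.
Proof. exact: (is_linearZ (laR^~ a)). Qed.
Lemma raDl a y z : ra (y + z) a = ra y a + ra z a.
Proof. exact: (is_linearD (f := ra^~ a) (raR^~ a)). Qed.
Lemma raZl k a y : ra (k *: y) a = k *: ra y a.
Proof. exact: (is_linearZ (f := ra^~ a) (raR^~ a)). Qed.

Lemma la_sharp_linl y : is_linear (la_sharp^~ y).
Proof.
move=> k u v; rewrite /la_sharp /= laL scalerDl scalerDr -scalerA.
by rewrite -!addrA; congr (_ + _); rewrite addrCA.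
Qed.

Lemma la_sharp_linr u : is_linear (la_sharp u).
Proof.
move=> k y z; rewrite /la_sharp laR scalerDr !scalerA mulrC -!scalerA scalerDr.
by rewrite -!addrA; congr (_ + _); rewrite addrCA.
Qed.

Lemma ra_sharp_linl u : is_linear (ra_sharp^~ u).
Proof.
move=> k y z; rewrite /ra_sharp raR scalerDr !scalerA mulrC -!scalerA scalerDr.
by rewrite -!addrA; congr (_ + _); rewrite addrCA.
Qed.

Lemma d_sharp_lin : is_linear d_sharp.
Proof. by move=> k u v; rewrite /d_sharp /= d_lin. Qed.

Lemma la_sharp1 y : la_sharp one_sharp y = y.
Proof.
rewrite /la_sharp /= scale1r (is_linear0 (f := la^~ y) (fun k a b => laL k a b y)).
exact: add0r.
Qed.

Lemma d_sharp1 : d_sharp one_sharp = 0.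
Proof. exact: is_linear0 d_lin. Qed.

Lemma la_sharpM u v y : la_sharp (mulU u v) y = la_sharp u (la_sharp v y).
Proof.
case: u v => [a l] [b m]; rewrite /la_sharp /unitization_mul /=.
rewrite !laDl !laZl laM laDr laZr scalerDr !scalerA -!addrA; congr (_ + _).
by rewrite addrCA; congr (_ + _); rewrite addrCA.
Qed.

Lemma d_sharpM u v : d_sharp (mulU u v) = ra_sharp (d_sharp u) v + la_sharp u (d_sharp v).
Proof.
case: u v => [a l] [b m]; rewrite /d_sharp /ra_sharp /la_sharp /unitization_mul /=.
rewrite !(is_linearD d_lin) !(is_linearZ d_lin) d_der -!addrA; congr (_ + _).
by rewrite [RHS]addrCA [m *: _ + _]addrC.
Qed.

Lemma la_ra_sharp u y v : la_sharp u (ra_sharp y v) = ra_sharp (la_sharp u y) v.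
Proof.
case: u v => [a l] [b m]; rewrite /la_sharp /ra_sharp /=.
rewrite laDr laZr raDl raZl la_ra !scalerDr !scalerA mulrC.
by rewrite -!addrA; congr (_ + _); rewrite addrCA; congr (_ + _); exact: addrC.
Qed.

Lemma sharp_action_bound (z y : Y) (a : A) (l : K) : `|z| <= C * `|a| * `|y| ->
  `|z + l *: y| <= (C + 1) * N (a, l) * `|y|.
Proof.
move=> zy; apply: (le_trans (ler_normD _ _)); rewrite normrZ.
apply: (le_trans (lerD zy (lexx _))); rewrite /unitization_norm /=.
have [a0 l0 y0] : [/\ 0 <= `|a|, 0 <= `|l| & 0 <= `|y|] by split; apply: normr_ge0.
set a' := `|a| in a0 *; set l' := `|l| in l0 *; set y' := `|y| in y0 *.
have -> : (C + 1) * (a' + l') * y' = (C * a' * y' + l' * y') + (C * l' * y' + a' * y') by ring.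
by rewrite lerDl addr_ge0 ?mulr_ge0.
Qed.

Lemma la_sharp_bound u y : `|la_sharp u y| <= (C + 1) * N u * `|y|.
Proof. by case: u => a l; apply/sharp_action_bound/(la_ra_bound a y).1. Qed.

Lemma ra_sharp_bound u y : `|ra_sharp y u| <= (C + 1) * N u * `|y|.
Proof. by case: u => a l; apply/sharp_action_bound/(la_ra_bound a y).2. Qed.

Variable M : K.
Hypothesis M0 : 0 <= M.
Hypothesis d_bound : forall a, `|d a| <= M * `|a|.

Lemma d_sharp_bound u : `|d_sharp u| <= M * N u.
Proof. by apply: (le_trans (d_bound _)); rewrite ler_wpM2l // lerDl. Qed.

Section SymmetricEstimate.
Variables (psi : Y -> K) (Mp : K).
Hypotheses (psi_lin : linear_functional psi) (Mp0 : 0 <= Mp).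
Hypothesis psi_bound : forall y, `|psi y| <= Mp * `|y|.
Hypothesis psi_comm : forall u v, psi (ra_sharp (d_sharp u) v) = psi (la_sharp v (d_sharp u)).

Definition dform (x y : A * K) : K := psi (la_sharp x (d_sharp y)).

Lemma dform_linl y : linear_functional (dform^~ y).
Proof. by move=> k x x'; rewrite /dform la_sharp_linl psi_lin. Qed.

Lemma dform_linr x : linear_functional (dform x).
Proof. by move=> k y y'; rewrite /dform d_sharp_lin la_sharp_linr psi_lin. Qed.

Let Kb := Mp * (C + 1) * M + 1.

Lemma dform_Kb_gt0 : 0 < Kb.
Proof. by rewrite ltr_wpDl // !mulr_ge0 // addr_ge0. Qed.

Lemma dform_bound x y : `|dform x y| <= Kb * (N x * N y).
Proof.
have Nx0 := unitization_norm_ge0 x.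
apply: (le_trans (psi_bound _)); apply: (le_trans (ler_wpM2l Mp0 (la_sharp_bound _ _))).
apply: (@le_trans _ _ (Mp * (C + 1) * M * (N x * N y))).
  rewrite -!mulrA !ler_wpM2l ?addr_ge0 // mulrCA ler_wpM2l //.
  by apply: (le_trans (d_sharp_bound y)); rewrite mulrC.
by rewrite ler_wpM2r ?lerDl // mulr_ge0 ?unitization_norm_ge0.
Qed.

Lemma symmetric_dform_estimate t p :
  ptensor_symmetric N t -> ptensor_pi N mulU t p ->
  exists S, tensor_eval dform t S /\ `|S| <= Mp * M * N (p - one_sharp).
Proof.
move=> t_sym t_pi.
have [s [ts fts]] := ptensor_symmetric_eval dform_linl dform_linr dform_Kb_gt0 dform_bound t_sym.
have psid_lin : linear_functional (psi \o d_sharp).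
  by move=> k u v /=; rewrite d_sharp_lin psi_lin.
have psid_bound u : `|(psi \o d_sharp) u| <= Mp * M * N u.
  by apply: (le_trans (psi_bound _)); rewrite -mulrA ler_wpM2l // d_sharp_bound.
have ss : series_to (fun z => `|z|) (fun n => psi (d_sharp (mulU (t n).1 (t n).2))) (s + s).
  apply: eq_series_to (series_toD fts ts) => n.
  by rewrite d_sharpM (linear_functionalD psi_lin) psi_comm.
have ps := series_to_linear psid_lin (mulr_ge0 Mp0 M0) psid_bound t_pi.
exists s; split => //; apply: (@le_trans _ _ `|s + s|).
  by rewrite -mulr2n normrMn mulr2n lerDl.
rewrite (series_to_unique ss ps) /=.
have -> : d_sharp p = d_sharp (p - one_sharp) by rewrite (is_linearB d_sharp_lin) d_sharp1 subr0.
exact: psid_bound.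
Qed.
End SymmetricEstimate.

Section DerivationModSubmodule.
Variables (X : set Y) (tau : A -> Y).
Hypothesis X_lin : forall (k : K) x y, X x -> X y -> X (k *: x + y).
Hypothesis X_la : forall a x, X x -> X (la a x).
Hypothesis X_ra : forall a x, X x -> X (ra x a).
Hypothesis tau_central : forall a b, la b (tau a) = ra (tau a) b.
Hypothesis dtau_X : forall a, X (d a + tau a).

Lemma X_sub x y : X x -> X y -> X (x - y).
Proof. by move=> Xx Xy; rewrite addrC -scaleN1r; apply: X_lin. Qed.

Lemma X_la_sharp u x : X x -> X (la_sharp u x).
Proof. by move=> Xx; rewrite /la_sharp addrC; apply: X_lin => //; apply: X_la. Qed.

Lemma X_ra_sharp u x : X x -> X (ra_sharp x u).
Proof. by move=> Xx; rewrite /ra_sharp addrC; apply: X_lin => //; apply: X_ra. Qed.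

Lemma commutator_d_sharp_in_X u v : X (ra_sharp (d_sharp u) v - la_sharp v (d_sharp u)).
Proof.
case: u v => [a l] [b m]; rewrite /d_sharp /ra_sharp /la_sharp /=.
rewrite opprD addrACA subrr addr0.
have -> : ra (d a) b - la b (d a) =
    (ra (d a + tau a) b - la b (d a + tau a)) - (ra (tau a) b - la b (tau a)).
  by rewrite raDl laDr tau_central subrr subr0 opprD addrACA subrr addr0.
by rewrite tau_central subrr subr0; apply: X_sub; [apply: X_ra | apply: X_la].
Qed.

Lemma vanishing_functional_comm psi : linear_functional psi -> (forall x, X x -> psi x = 0) ->
  forall u v, psi (ra_sharp (d_sharp u) v) = psi (la_sharp v (d_sharp u)).
Proof.
move=> psi_lin psi_X u v; apply/eqP; rewrite -subr_eq0 -(linear_functionalB psi_lin).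
by rewrite psi_X //; apply: commutator_d_sharp_in_X.
Qed.

Section VanishingFunctional.
Variables (phi : Y -> K) (Mphi : K).
Hypotheses (phi_lin : linear_functional phi) (Mphi0 : 0 <= Mphi).
Hypothesis phi_bound : forall y, `|phi y| <= Mphi * `|y|.
Hypothesis phi_X : forall x, X x -> phi x = 0.

Lemma phi_la_sharp_bound u y : `|phi (la_sharp u y)| <= Mphi * (C + 1) * N u * `|y|.
Proof. by apply: (le_trans (phi_bound _)); rewrite -!mulrA ler_wpM2l // !mulrA la_sharp_bound. Qed.

Lemma transported_dform_estimate (T : Y -> Y) (MT : K) t p :
  is_linear T -> 0 <= MT -> (forall y, `|T y| <= MT * `|y|) -> (forall x, X x -> X (T x)) ->
  ptensor_symmetric N t -> ptensor_pi N mulU t p ->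
  exists S, tensor_eval (dform (phi \o T)) t S /\ `|S| <= Mphi * MT * M * N (p - one_sharp).
Proof.
move=> T_lin MT0 T_bound T_X; apply: symmetric_dform_estimate.
- by move=> k x y /=; rewrite T_lin phi_lin.
- by rewrite mulr_ge0.
- by move=> y /=; apply: (le_trans (phi_bound _)); rewrite -mulrA ler_wpM2l.
- apply: vanishing_functional_comm => [k x y|x Xx] /=; first by rewrite T_lin phi_lin.
  by apply/phi_X/T_X.
Qed.

Lemma dform_lmul_eval u t s : tensor_eval (dform (phi \o la_sharp u)) t s ->
  tensor_eval (dform phi) (ptensor_lmul mulU u t) s.
Proof. by apply: eq_series_to => n; rewrite /dform la_sharpM. Qed.

Lemma dform_rmul_eval u t p S : ptensor_pi N mulU t p ->
  tensor_eval (dform (phi \o ra_sharp^~ u)) t S ->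
  tensor_eval (dform phi) (ptensor_rmul mulU t u) (S + phi (la_sharp p (d_sharp u))).
Proof.
move=> t_pi tS; set w := d_sharp u.
have w_lin : linear_functional (fun v => phi (la_sharp v w)).
  by move=> k x y; rewrite la_sharp_linl phi_lin.
have w_bound v : `|phi (la_sharp v w)| <= Mphi * (C + 1) * `|w| * N v.
  by rewrite mulrAC; apply: phi_la_sharp_bound.
have Mw0 : 0 <= Mphi * (C + 1) * `|w| by rewrite !mulr_ge0 // addr_ge0.
apply: eq_series_to (series_toD tS (series_to_linear w_lin Mw0 w_bound t_pi)) => n.
rewrite /dform /= d_sharpM (is_linearD (la_sharp_linr _)) (linear_functionalD phi_lin).
by rewrite la_ra_sharp la_sharpM.
Qed.

Lemma phi_d_le c t p e : ptensor_symmetric N t -> ptensor_pi N mulU t p ->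
  N (p - one_sharp) <= e ->
  ptensor_dist_le N (ptensor_lmul mulU (c, 0) t) (ptensor_rmul mulU t (c, 0)) e ->
  `|phi (d c)| <= (Mphi * (C + 1) * M + 1 + 2 * (Mphi * ((C + 1) * N (c, 0)) * M)
                   + Mphi * (C + 1) * `|d c|) * e.
Proof.
move=> t_sym t_pi pe t_dist; set uc : A * K := (c, 0).
have e0 : 0 <= e := le_trans (unitization_norm_ge0 _) pe.
set a1 := Mphi * ((C + 1) * N uc) * M.
have a10 : 0 <= a1 by rewrite !mulr_ge0 ?addr_ge0 ?unitization_norm_ge0.
have uc0 : 0 <= (C + 1) * N uc by rewrite mulr_ge0 ?addr_ge0 ?unitization_norm_ge0.
have [S1 [tS1 S1e]] := transported_dform_estimate (la_sharp_linr uc) uc0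
  (la_sharp_bound uc) (X_la_sharp uc) t_sym t_pi.
have [S2 [tS2 S2e]] := transported_dform_estimate (ra_sharp_linl uc) uc0
  (ra_sharp_bound uc) (X_ra_sharp uc) t_sym t_pi.
have [s1 [s2 [ts1 ts2 s12]]] := ptensor_dist_le_eval (dform_linl phi_lin) (dform_linr phi_lin)
  (dform_Kb_gt0 Mphi0) (dform_bound Mphi0 phi_bound) t_dist.
rewrite (series_to_unique ts1 (dform_lmul_eval tS1)) in s12.
rewrite (series_to_unique ts2 (dform_rmul_eval t_pi tS2)) in s12.
change (d c) with (d_sharp uc); set w := d_sharp uc in s12 *.
set Z := phi (la_sharp (p - one_sharp) w).
have pw : phi (la_sharp p w) = phi w + Z.
  rewrite -[in LHS](subrK one_sharp p) (is_linearD (la_sharp_linl w)).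
  by rewrite (linear_functionalD phi_lin) la_sharp1 addrC.
have Ze : `|Z| <= Mphi * (C + 1) * `|w| * e.
  apply: (le_trans (phi_la_sharp_bound _ _)); rewrite mulrAC.
  by rewrite ler_wpM2l // !mulr_ge0 ?addr_ge0.
have Se S : `|S| <= a1 * N (p - one_sharp) -> `|S| <= a1 * e.
  by move=> /le_trans; apply; rewrite ler_wpM2l.
have -> : phi w = (S1 - S2 - Z) - (S1 - (S2 + phi (la_sharp p w))) by rewrite pw; ring.
apply: (le_trans (ler_normB _ _)).
have -> : (Mphi * (C + 1) * M + 1 + 2 * a1 + Mphi * (C + 1) * `|w|) * e =
  (a1 * e + a1 * e + Mphi * (C + 1) * `|w| * e) + (Mphi * (C + 1) * M + 1) * e by ring.
apply: lerD s12; apply: (le_trans (ler_normB _ _)); apply: lerD Ze.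
by apply: (le_trans (ler_normB _ _)); apply: lerD; apply: Se.
Qed.

Lemma vanishing_functional_d : sym_pseudo_amenable N mulU -> forall c, phi (d c) = 0.
Proof.
move=> [I [le [t [[_ _ _ le_dir] t_ok t_approx]]]] c.
eapply eq0_norm_le_eps; last first.
- move=> e e0; have [i0 i0_approx] := t_approx (c, 0) e e0.
  have [i1 i1_approx] := t_approx one_sharp e e0.
  have [k [i0k i1k]] := le_dir i0 i1.
  have [t_dist _] := i0_approx k i0k.
  have [_ [p [t_pi pe]]] := i1_approx k i1k.
  rewrite unitization_mul1 in pe.
  exact: phi_d_le (t_ok k).2 t_pi pe t_dist.
- by rewrite !addr_ge0 ?ler01 // !mulr_ge0 ?addr_ge0 ?unitization_norm_ge0.
Qed.
End VanishingFunctional.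
End DerivationModSubmodule.
End UnitizationAction.

Unset Implicit Arguments. Set Strict Implicit. Set Printing Implicit Defensive.

Theorem lemma6p3 (R : realType) (A : completeNormedModType R[i])
  (mul : A -> A -> A) (Y : completeNormedModType R[i])
  (la : A -> Y -> Y) (ra : Y -> A -> Y) (X : set Y)
  (d tau : A -> Y) :
  banach_algebra_mul mul ->
  sym_pseudo_amenable (@unitization_norm R A) (unitization_mul mul) ->
  banach_bimodule mul la ra ->
  closed_subbimodule la ra X ->
  is_derivation mul la ra d -> is_bounded d ->
  is_linear tau -> (forall a, centre_in la ra setT (tau a)) ->
  (forall a, X (d a + tau a)) ->
  (forall a, X (d a)) /\ (forall a, centre_in la ra X (tau a)).
Proof.
move=> [_ [_ [mulDr _]]] amenable [laL [laR [_ [raR [laM [_ [la_ra [C [C0 la_ra_bound]]]]]]]]].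
move=> [X_closed X0 X_lin X_la X_ra] [d_lin d_der] [M [M0 d_bound]] _ tau_centre dtau_X.
have tau_central a b : la b (tau a) = ra (tau a) b by case: (tau_centre a).
have dX c : X (d c).
  apply: contrapT => Xdc.
  have [phi [phi_lin phi_bound phi_X /eqP[]]] := hahn_banach_separation X_closed X0 X_lin Xdc.
  have phi_bound1 y : `|phi y| <= 1 * `|y| by rewrite mul1r.
  exact: (vanishing_functional_d mulDr laL laR raR laM la_ra C0 la_ra_bound d_lin d_der
    M0 d_bound X_lin X_la X_ra tau_central dtau_X phi_lin ler01 phi_bound1 phi_X amenable).
split=> // a; split=> [|b]; last exact: tau_central.
have -> : tau a = (d a + tau a) - d a by rewrite addrC addKr.
exact: X_sub.
Qed.
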